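(* Let $f:\mathbb{R}^d\times\mathcal{X}\to\mathbb{R}$ be differentiable in $\theta$, with $\mathcal{X}$ a subset of a Euclidean space, $\sup_{x\in\mathcal{X}}\Vert x\Vert\le D<\infty$ and $\sup_{x\in\mathcal{X}}\Vert\nabla f(0,x)\Vert\le E<\infty$. Assume (A1): there are $K_1,K_2>0$ with $\Vert\nabla f(\theta,x)-\nabla f(\hat\theta,\hat x)\Vert\le K_1\Vert\theta-\hat\theta\Vert+K_2\Vert x-\hat x\Vert(\Vert\theta\Vert+\Vert\hat\theta\Vert+1)$ for all $\theta,\hat\theta\in\mathbb{R}^d$, $x,\hat x\in\mathcal{X}$; (A3): there are $m>0,K>0$ with $\langle\nabla f(\theta_1,x)-\nabla f(\theta_2,x),\theta_1-\theta_2\rangle\ge m\Vert\theta_1-\theta_2\Vert^2-K$ for all $\theta_1,\theta_2,x$. Let $X_n=(x_1,\dots,x_n)$, $\hat X_n=(\hat x_1,\dots,\hat x_n)\in\mathcal{X}^n$ differ in at most one index, $b\in\{1,\dots,n\}$, $(\Omega_k)$ i.i.d. uniformly random $b$-subsets of $\{1,\dots,n\}$, and $$\theta_k=\theta_{k-1}-\tfrac\eta b\textstyle\sum_{i\in\Omega_k}\nabla f(\theta_{k-1},x_i),\qquad\hat\theta_k=\hat\theta_{k-1}-\tfrac\eta b\sum_{i\in\Omega_k}\nabla f(\hat\theta_{k-1},\hat x_i),$$ with $\theta_0=\hat\theta_0=\theta\in\mathbb{R}^d$. Assume $\eta<\min\left\{\frac1m,\frac{m}{K_1^2+64D^2K_2^2}\right\}$.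 Let $\nu_k,\hat\nu_k$ be the laws of $\theta_k,\hat\theta_k$, let $r:=\frac{E+\sqrt{E^2+4mK}}{2m}$ and $$B:=4\Vert\theta\Vert^2+4r^2+4-\frac{2\eta}{m}K_1^2-\frac{112\eta}{m}D^2K_2^2+\frac{128\eta}{m}D^2K_2^2r^2+\frac{4K}{m}+2r^2.$$ Then for all $k$, $$\mathcal{W}_2^2(\nu_k,\hat\nu_k)\le\left(1-(1-\eta m)^k\right)\left(\frac{4D^2K_2^2\eta(8B+2)}{bnm}+\frac{4K_2D(1+K_1\eta)}{nm}(1+5B)+\frac{2K}{m}\right).$$
   Context: $\mathcal{W}_2$ is the 2-Wasserstein distance: $\mathcal{W}_2(\mu,\nu)^2=\inf\mathbb{E}\Vert X-Y\Vert^2$ over couplings of $X\sim\mu$, $Y\sim\nu$. *)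

From HB Require Import structures.
From mathcomp Require Import all_boot all_order all_algebra.
From mathcomp Require Import all_classical all_reals all_analysis.
Set Implicit Arguments. Unset Strict Implicit. Unset Printing Implicit Defensive.
Import Order.TTheory GRing.Theory Num.Theory.
Import numFieldNormedType.Exports.
Local Open Scope classical_set_scope.
Local Open Scope ring_scope.

Section Defs.
Variable R : realType.

Definition vdot (d : nat) (u v : 'rV[R]_d) : R := \sum_(i < d) u ord0 i * v ord0 i.
Definition vnorm (d : nat) (v : 'rV[R]_d) : R := Num.sqrt (vdot v v).

Definition bsubset (n b : nat) := {A : {set 'I_n} | #|A| == b}.

Definition sgd (d p n : nat) (grad : 'rV[R]_d -> 'rV[R]_p -> 'rV[R]_d)
  (xs : 'I_n -> 'rV[R]_p) (eta : R) (b : nat) (th : 'rV[R]_d)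
  (ws : seq {set 'I_n}) : 'rV[R]_d :=
  foldl (fun t (A : {set 'I_n}) => t - (eta / b%:R) *: \sum_(i in A) grad t (xs i)) th ws.

(* Law of theta_k, with (O_1,...,O_k) i.i.d. uniform over b-subsets:
   a finitely supported probability on R^d given by its mass function
   y |-> P(theta_k = y). *)
Definition sgd_law (d p n : nat) (grad : 'rV[R]_d -> 'rV[R]_p -> 'rV[R]_d)
  (xs : 'I_n -> 'rV[R]_p) (eta : R) (b : nat) (th : 'rV[R]_d) (k : nat)
  : 'rV[R]_d -> R :=
  fun y => \sum_(w : k.-tuple (bsubset n b))
     (#|{: bsubset n b}|%:R ^- k) *
     (sgd grad xs eta b th (map val (tval w)) == y)%:R.

(* A coupling of two finitely supported (mass-function) laws mu, nu on R^d:
   a finite discrete measure on R^d x R^d (list of weighted atoms) with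
   nonnegative weights and marginals mu and nu.  (Every coupling of two
   finitely supported measures is of this form.) *)
Definition is_coupling (d : nat) (mu nu : 'rV[R]_d -> R)
  (c : seq (R * ('rV[R]_d * 'rV[R]_d))) : Prop :=
  (forall a, a \in c -> 0 <= a.1) /\
  (forall z, \sum_(a <- c | a.2.1 == z) a.1 = mu z) /\
  (forall z, \sum_(a <- c | a.2.2 == z) a.1 = nu z).

Definition coupling_cost (d : nat) (c : seq (R * ('rV[R]_d * 'rV[R]_d))) : R :=
  \sum_(a <- c) a.1 * vnorm (a.2.1 - a.2.2) ^+ 2.

Definition W2sq (d : nat) (mu nu : 'rV[R]_d -> R) : R :=
  inf [set coupling_cost c | c in [set c | is_coupling mu nu c]].

End Defs.

(* Couple the two chains synchronously, i.e. feed both the same batches; the cost of this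
   coupling bounds W_2^2.  Dissipativity (A3) together with the parameter-Lipschitz part of (A1)
   makes one step a contraction up to an additive slack,
     |Delta_{k+1}|^2 <= (1 - eta m) |Delta_k|^2 + 2 eta K,
   to which a perturbation is added whenever the batch contains the index j where the data sets
   differ, an event of probability b/n.  The perturbation is controlled by the data-Lipschitz part
   of (A1) once the iterates are known to stay in a ball: the same contraction estimate shows that
   the ball of radius max(|theta|, 2r) is invariant.  Averaging the one-step bound over the batch
   and iterating gives the geometric factor 1 - (1 - eta m)^k. *)

From HB Require Import structures.
From mathcomp Require Import all_boot all_order all_algebra all_fingroup.
From mathcomp Require Import all_classical all_reals all_analysis.
From mathcomp Require Import lra ring.
Set Implicit Arguments. Unset Strict Implicit. Unset Printing Implicit Defensive.
Import Order.TTheory GRing.Theory Num.Theory.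
Import numFieldNormedType.Exports.
Local Open Scope ring_scope.

Section Euclidean.
Variables (R : realType) (d : nat).
Implicit Types (u v w : 'rV[R]_d) (c : R).

Lemma vdotC u v : vdot u v = vdot v u.
Proof. by apply: eq_bigr => i _; rewrite mulrC. Qed.

Lemma vdotDl u v w : vdot (u + v) w = vdot u w + vdot v w.
Proof. by rewrite /vdot -big_split; apply: eq_bigr => i _; rewrite mxE mulrDl. Qed.

Lemma vdotZl c u w : vdot (c *: u) w = c * vdot u w.
Proof. by rewrite /vdot mulr_sumr; apply: eq_bigr => i _; rewrite mxE mulrA. Qed.

Lemma vdotNl u w : vdot (- u) w = - vdot u w.
Proof. by rewrite -scaleN1r vdotZl mulN1r. Qed.

Lemma vdotBl u v w : vdot (u - v) w = vdot u w - vdot v w.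
Proof. by rewrite vdotDl vdotNl. Qed.

Lemma vdotDr u v w : vdot w (u + v) = vdot w u + vdot w v.
Proof. by rewrite vdotC vdotDl !(vdotC w). Qed.

Lemma vdotBr u v w : vdot w (u - v) = vdot w u - vdot w v.
Proof. by rewrite vdotC vdotBl !(vdotC w). Qed.

Lemma vdotZr c u w : vdot w (c *: u) = c * vdot w u.
Proof. by rewrite vdotC vdotZl vdotC. Qed.

Lemma vdot0l w : vdot 0 w = 0.
Proof. by rewrite -(scale0r 0) vdotZl mul0r. Qed.

Lemma vdot_sumr (I : finType) (P : pred I) (F : I -> 'rV[R]_d) u :
  vdot u (\sum_(i | P i) F i) = \sum_(i | P i) vdot u (F i).
Proof.
elim/big_rec2: _ => [|i y z _ <-]; first by rewrite vdotC vdot0l.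
by rewrite vdotDr.
Qed.

Lemma vdotrr_ge0 u : 0 <= vdot u u.
Proof. by apply: sumr_ge0 => i _; rewrite -expr2 sqr_ge0. Qed.

Lemma vdotrr_eq0 u : vdot u u = 0 -> u = 0.
Proof.
move=> /eqP; rewrite psumr_eq0 => [/allP uu0|i _]; last by rewrite -expr2 sqr_ge0.
apply/rowP => i; rewrite mxE; apply/eqP.
by rewrite -sqrf_eq0 expr2; apply: uu0; rewrite mem_index_enum.
Qed.

Lemma vnorm_ge0 u : 0 <= vnorm u.
Proof. exact: sqrtr_ge0. Qed.

Lemma vnorm_sqr u : vnorm u ^+ 2 = vdot u u.
Proof. by rewrite sqr_sqrtr // vdotrr_ge0. Qed.

Lemma vnorm0 : vnorm (0 : 'rV[R]_d) = 0.
Proof. by rewrite /vnorm vdot0l sqrtr0. Qed.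

Lemma vnormZ c u : vnorm (c *: u) = `|c| * vnorm u.
Proof. by rewrite /vnorm vdotZl vdotZr mulrA -expr2 sqrtrM ?sqr_ge0 // sqrtr_sqr. Qed.

Lemma vnormN u : vnorm (- u) = vnorm u.
Proof. by rewrite -scaleN1r vnormZ normrN normr1 mul1r. Qed.

Lemma vnormB_sqr u v : vnorm (u - v) ^+ 2 = vnorm u ^+ 2 - 2 * vdot u v + vnorm v ^+ 2.
Proof. by rewrite !vnorm_sqr !(vdotBl, vdotBr) (vdotC v u); ring. Qed.

Lemma vdot_le_vnorm u v : vdot u v <= vnorm u * vnorm v.
Proof.
have [-> | u0] := eqVneq u 0; first by rewrite vdot0l vnorm0 mul0r.
have [-> | v0] := eqVneq v 0; first by rewrite vdotC vdot0l vnorm0 mulr0.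
have pos w : w != 0 -> 0 < vnorm w.
  move=> w0; rewrite lt_def vnorm_ge0 andbT; apply: contra w0 => /eqP w0.
  by apply/eqP/vdotrr_eq0; rewrite -vnorm_sqr w0 expr0n.
(* expand [0 <= | |v| u - |u| v |^2] *)
have := vdotrr_ge0 (vnorm v *: u - vnorm u *: v).
rewrite -vnorm_sqr vnormB_sqr !vnormZ vdotZl vdotZr !ger0_norm ?vnorm_ge0 //.
have := mulr_gt0 (pos u u0) (pos v v0); nra.
Qed.

Lemma vnormD_le u v : vnorm (u + v) <= vnorm u + vnorm v.
Proof.
rewrite -ler_sqr ?nnegrE ?addr_ge0 ?vnorm_ge0 //.
rewrite -{1}(opprK v) vnormB_sqr vnormN vdotC vdotNl.
have := vdot_le_vnorm v u; nra.
Qed.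

Lemma vnormB_le u v : vnorm (u - v) <= vnorm u + vnorm v.
Proof. by rewrite -(vnormN v) vnormD_le. Qed.

Lemma vnorm_sum_le (I : finType) (P : pred I) (F : I -> 'rV[R]_d) :
  vnorm (\sum_(i | P i) F i) <= \sum_(i | P i) vnorm (F i).
Proof.
elim/big_rec2: _ => [|i y z _ h]; first by rewrite vnorm0.
by apply: le_trans (vnormD_le _ _) _; rewrite lerD2l.
Qed.

Lemma vnorm_sum_le_card (I : finType) (A : {set I}) (F : I -> 'rV[R]_d) (a : R) :
  (forall i, i \in A -> vnorm (F i) <= a) -> vnorm (\sum_(i in A) F i) <= #|A|%:R * a.
Proof.
move=> Fa; apply: le_trans (vnorm_sum_le _ _) _.
by rewrite mulr_natl -sumr_const; apply: ler_sum.
Qed.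

End Euclidean.

Section BatchSampling.
Variables (R : realType) (n b : nat).

Lemma card_bsubset_gt0 : (b <= n)%N -> (0 < #|{: bsubset n b}|)%N.
Proof.
move=> bn; have := card_draws 'I_n b; rewrite card_ord => draws.
rewrite card_sig (eq_card (B := [set A : {set 'I_n} | #|A| == b])) => [|A].
  by rewrite draws bin_gt0.
by rewrite !inE.
Qed.

Lemma sum_bsubset_mem_sym (i j : 'I_n) :
  \sum_(A : bsubset n b) ((i \in val A)%:R : R) = \sum_(A : bsubset n b) (j \in val A)%:R.
Proof.
have card_swap (A : bsubset n b) : #|[set tperm i j x | x in val A]| == b.
  by rewrite card_imset ?(valP A) //; exact: perm_inj.
pose swap (A : bsubset n b) : bsubset n b :=
  exist (fun B : {set 'I_n} => #|B| == b) _ (card_swap A).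
have swapK : involutive swap.
  move=> A; apply/val_inj; rewrite /= -imset_comp -[RHS]imset_id.
  by apply: eq_imset => x /=; rewrite tpermK.
rewrite (reindex_inj (inv_inj swapK)); apply: eq_bigr => A _ /=.
by rewrite -{1}(tpermR i j) mem_imset //; exact: perm_inj.
Qed.

Lemma sum_bsubset_mem (j : 'I_n) :
  n%:R * \sum_(A : bsubset n b) ((j \in val A)%:R : R) = #|{: bsubset n b}|%:R * b%:R.
Proof.
(* double counting of the pairs (i, A) with i \in A *)
have -> : n%:R = #|'I_n|%:R :> R by rewrite card_ord.
rewrite !mulr_natl -!sumr_const.
rewrite -(eq_bigr _ (fun i _ => sum_bsubset_mem_sym i j)) exchange_big /=.
apply: eq_bigr => A _; have -> : b%:R = #|val A|%:R :> R by rewrite (eqP (valP A)).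
rewrite -sum1_card natr_sum [RHS]big_mkcond.
by apply: eq_bigr => i _; case: (i \in val A).
Qed.

End BatchSampling.

Section TupleMean.
Variables (R : realType) (T : finType).

Lemma big_tuple_rcons k (G : k.+1.-tuple T -> R) :
  \sum_(w : k.+1.-tuple T) G w = \sum_(w : k.-tuple T) \sum_(A : T) G (rcons_tuple w A).
Proof.
rewrite pair_bigA /=.
have rcons_inj : injective (fun wA : k.-tuple T * T => rcons_tuple wA.1 wA.2).
  by move=> [w1 A1] [w2 A2] /(congr1 val) /rcons_inj [/val_inj -> ->].
rewrite (reindex _ (onW_bij _ (inj_card_bij rcons_inj _))) //.
by rewrite card_prod !card_tuple expnSr.
Qed.

Lemma tuple_mean_geometric_le (F : forall k, k.-tuple T -> R) (g : T -> R) (q C : R) :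
  (0 < #|T|)%N -> 0 <= q -> \sum_(A : T) g A = #|T|%:R * ((1 - q) * C) ->
  (forall w : 0.-tuple T, F 0%N w <= 0) ->
  (forall k (w : k.-tuple T) A, F k.+1 (rcons_tuple w A) <= q * F k w + g A) ->
  forall k, \sum_(w : k.-tuple T) #|T|%:R ^- k * F k w <= (1 - q ^+ k) * C.
Proof.
move=> T_gt0 q_ge0 g_mean F0 F_rec; set N : R := #|T|%:R.
have N_gt0 : 0 < N by rewrite ltr0n.
have mass1 k : \sum_(w : k.-tuple T) N ^- k = 1.
  by rewrite sumr_const card_tuple -mulr_natl natrX mulfV // expf_neq0 ?gt_eqF.
elim=> [|k IH].
  by rewrite !expr0 invr1 subrr mul0r; apply: sumr_le0 => w _; rewrite mul1r.
have step w : \sum_(A : T) N ^- k.+1 * F k.+1 (rcons_tuple w A)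
    <= q * (N ^- k * F k w) + N ^- k * ((1 - q) * C).
  apply: le_trans (ler_sum _ (fun A _ => ler_wpM2l _ (F_rec k w A))) _.
    by rewrite invr_ge0 exprn_ge0 ?ltW.
  rewrite -mulr_sumr big_split /= sumr_const g_mean -mulr_natl -/N exprSr invfM.
  by rewrite le_eqVlt; apply/orP; left; apply/eqP; field; rewrite expf_neq0 ?gt_eqF.
rewrite big_tuple_rcons; apply: le_trans (ler_sum _ (fun w _ => step w)) _.
rewrite big_split /= -mulr_sumr -mulr_suml mass1 mul1r.
have := ler_wpM2l q_ge0 IH; rewrite exprS; lra.
Qed.

End TupleMean.

Section SynchronousCoupling.
Variables (R : realType) (d : nat).

Lemma W2sq_le_cost (mu nu : 'rV[R]_d -> R) c :
  is_coupling mu nu c -> W2sq mu nu <= coupling_cost c.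
Proof.
move=> c_mu_nu; apply: ge_inf; last by exists c.
exists 0; apply/lbP => _ [c' [c'_ge0 _] <-]; rewrite /coupling_cost big_seq.
by apply: sumr_ge0 => a /c'_ge0 a_ge0; rewrite mulr_ge0 ?sqr_ge0.
Qed.

Lemma W2sq_sync_le (T : finType) (a : R) (phi psi : T -> 'rV[R]_d) : 0 <= a ->
  W2sq (fun y => \sum_(w : T) a * (phi w == y)%:R) (fun y => \sum_(w : T) a * (psi w == y)%:R)
  <= \sum_(w : T) a * vnorm (phi w - psi w) ^+ 2.
Proof.
move=> a_ge0.
pose c := [seq (a, (phi w, psi w)) | w <- index_enum T].
have marginal (f : T -> 'rV[R]_d) y :
    \sum_(w <- index_enum T | f w == y) a = \sum_(w : T) a * (f w == y)%:R.
  by rewrite big_mkcond; apply: eq_bigr => w _; case: eqP; rewrite ?mulr1 ?mulr0.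
apply: le_trans (W2sq_le_cost (c := c) _) _; last by rewrite /coupling_cost big_map.
split; [by move=> _ /mapP[w _ ->] | split=> y; rewrite big_map; exact: marginal].
Qed.

End SynchronousCoupling.

Section MinibatchSGD.
Variables (R : realType) (d p n : nat) (X : set 'rV[R]_p).
Variables (grad : 'rV[R]_d -> 'rV[R]_p -> 'rV[R]_d) (D E K1 K2 m K eta : R) (b : nat).
Hypothesis grad_lipschitz : forall th th' x x', x \in X -> x' \in X ->
  vnorm (grad th x - grad th' x') <=
    K1 * vnorm (th - th') + K2 * vnorm (x - x') * (vnorm th + vnorm th' + 1).
Hypothesis grad_dissipative : forall th1 th2 x, x \in X ->
  vdot (grad th1 x - grad th2 x) (th1 - th2) >= m * vnorm (th1 - th2) ^+ 2 - K.
Hypotheses (b_gt0 : (0 < b)%N) (eta_gt0 : 0 < eta) (etaK1_le : eta * K1 ^+ 2 <= m).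

Implicit Types (xs xhs : 'I_n -> 'rV[R]_p) (A : {set 'I_n}) (ws : seq {set 'I_n}).
Implicit Types (u uh v th : 'rV[R]_d).

Let rate_ge0 : 0 <= eta / b%:R.
Proof. by rewrite divr_ge0 ?ler0n ?ltW. Qed.

Let rate_mul : eta / b%:R * b%:R = eta.
Proof. by rewrite divfK // pnatr_eq0 -lt0n. Qed.

Definition sgd_step (xs : 'I_n -> 'rV[R]_p) (t : 'rV[R]_d) (A : {set 'I_n}) : 'rV[R]_d :=
  t - (eta / b%:R) *: \sum_(i in A) grad t (xs i).

Lemma sgd_rcons xs th ws A :
  sgd grad xs eta b th (rcons ws A) = sgd_step xs (sgd grad xs eta b th ws) A.
Proof. by rewrite /sgd foldl_rcons. Qed.

Lemma grad_lipschitz_param th th' x : x \in X ->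
  vnorm (grad th x - grad th' x) <= K1 * vnorm (th - th').
Proof.
by move=> xX; have := grad_lipschitz th th' xX xX; rewrite subrr vnorm0 mulr0 mul0r addr0.
Qed.

Lemma batch_contraction xs A u v : (forall i, xs i \in X) -> #|A| = b ->
  vnorm (u - v - (eta / b%:R) *: \sum_(i in A) (grad u (xs i) - grad v (xs i))) ^+ 2
    <= (1 - eta * m) * vnorm (u - v) ^+ 2 + 2 * eta * K.
Proof.
move=> xsX cardA; set S := \sum_(i in A) _; set c := eta / b%:R; set a := vnorm (u - v).
have dotS : eta * (m * a ^+ 2 - K) <= c * vdot (u - v) S.
  rewrite -rate_mul -[_ / _ * _ * _]mulrA; apply: (ler_wpM2l rate_ge0).
  rewrite vdot_sumr -cardA mulr_natl -sumr_const; apply: ler_sum => i _.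
  by rewrite vdotC; exact: grad_dissipative.
have normS : vnorm S <= b%:R * (K1 * a).
  by rewrite -cardA; apply: vnorm_sum_le_card => i _; exact: grad_lipschitz_param.
have cS_le : c * vnorm S <= eta * K1 * a.
  by apply: le_trans (ler_wpM2l rate_ge0 normS) _; rewrite !mulrA rate_mul.
have K1a_sqr : (eta * K1 * a) ^+ 2 <= eta * m * a ^+ 2.
  have -> : (eta * K1 * a) ^+ 2 = eta * (eta * K1 ^+ 2) * a ^+ 2 by ring.
  by rewrite ler_wpM2r ?sqr_ge0 // ler_wpM2l // ltW.
have cS_ge0 : 0 <= c * vnorm S by rewrite mulr_ge0 ?vnorm_ge0.
have : (c * vnorm S) ^+ 2 <= (eta * K1 * a) ^+ 2.
  by rewrite ler_sqr ?nnegrE // (le_trans cS_ge0).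
rewrite (vnormB_sqr (u - v)) vdotZr vnormZ ger0_norm // -/a.
lra.
Qed.

Lemma batch_step_lipschitz xs A u v : (forall i, xs i \in X) -> #|A| = b ->
  vnorm (u - v - (eta / b%:R) *: \sum_(i in A) (grad u (xs i) - grad v (xs i)))
    <= (1 + eta * K1) * vnorm (u - v).
Proof.
move=> xsX cardA; apply: le_trans (vnormB_le _ _) _; rewrite vnormZ (ger0_norm rate_ge0).
have normS : vnorm (\sum_(i in A) (grad u (xs i) - grad v (xs i))) <= b%:R * (K1 * vnorm (u - v)).
  by rewrite -cardA; apply: vnorm_sum_le_card => i _; exact: grad_lipschitz_param.
have := ler_wpM2l rate_ge0 normS; rewrite !mulrA rate_mul; lra.
Qed.

Lemma sgd_step_sub xs xhs A u uh :
  sgd_step xs u A - sgd_step xhs uh A =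
    u - uh - (eta / b%:R) *: \sum_(i in A) (grad u (xs i) - grad uh (xs i))
    - (eta / b%:R) *: \sum_(i in A) (grad uh (xs i) - grad uh (xhs i)).
Proof.
rewrite /sgd_step !sumrB !scalerBr; set c := eta / b%:R.
set P := c *: \sum_(i in A) grad u (xs i); set Z := c *: \sum_(i in A) grad uh (xs i).
rewrite !opprB -[RHS]addrA [(Z - P) + _]addrC subrKA.
by rewrite addrACA [RHS]addrACA [- uh + _]addrC.
Qed.

Hypotheses (m_gt0 : 0 < m) (K_ge0 : 0 <= K) (eta_m_le1 : eta * m <= 1).
Hypothesis grad0_bound : forall x, x \in X -> vnorm (grad 0 x) <= E.

Lemma sgd_step_vnorm_le xs A M u : (forall i, xs i \in X) -> #|A| = b ->
  2 * (E * M + K) <= m * M ^+ 2 -> eta * E <= M ->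
  vnorm u <= M -> vnorm (sgd_step xs u A) <= M.
Proof.
move=> xsX cardA M_big etaE_le uM; set c := eta / b%:R.
set W := u - 0 - c *: \sum_(i in A) (grad u (xs i) - grad 0 (xs i)).
have -> : sgd_step xs u A = W - c *: \sum_(i in A) grad 0 (xs i).
  by rewrite /W /sgd_step subr0 sumrB scalerBr opprB addrA (addrAC u) addrK.
have drift_le : vnorm (c *: \sum_(i in A) grad 0 (xs i)) <= eta * E.
  rewrite vnormZ ger0_norm // -rate_mul -mulrA ler_wpM2l // -cardA.
  by apply: vnorm_sum_le_card => i _; exact: grad0_bound.
have W_le : vnorm W <= M - eta * E.
  rewrite -ler_sqr ?nnegrE ?vnorm_ge0 ?subr_ge0 //.
  apply: le_trans (batch_contraction u 0 xsX cardA) _; rewrite subr0.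
  have : vnorm u ^+ 2 <= M ^+ 2 by rewrite ler_sqr ?nnegrE ?vnorm_ge0 // (le_trans _ uM) ?vnorm_ge0.
  have contr_ge0 : 0 <= 1 - eta * m by rewrite subr_ge0.
  move/(ler_wpM2l contr_ge0); have := ler_wpM2l (ltW eta_gt0) M_big.
  have := sqr_ge0 (eta * E); lra.
by apply: le_trans (vnormB_le _ _) _; lra.
Qed.

Lemma sgd_vnorm_le xs th ws M : (forall i, xs i \in X) -> all (fun A => #|A| == b) ws ->
  2 * (E * M + K) <= m * M ^+ 2 -> eta * E <= M ->
  vnorm th <= M -> vnorm (sgd grad xs eta b th ws) <= M.
Proof.
move=> xsX + M_big etaE_le; elim/last_ind: ws => [//|ws A IH].
rewrite all_rcons => /andP[/eqP cardA /IH{}IH] /IH thM.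
by rewrite sgd_rcons; apply: sgd_step_vnorm_le.
Qed.

Lemma sgd_vnorm_sqr_le xs th ws r : (forall i, xs i \in X) -> all (fun A => #|A| == b) ws ->
  0 <= r -> E <= m * r -> m * r ^+ 2 = E * r + K ->
  vnorm (sgd grad xs eta b th ws) ^+ 2 <= vnorm th ^+ 2 + 4 * r ^+ 2.
Proof.
move=> xsX wsb r_ge0 Er r_root.
have [M [thM rM M_sqr]] : exists M,
    [/\ vnorm th <= M, 2 * r <= M & M ^+ 2 <= vnorm th ^+ 2 + 4 * r ^+ 2].
  have [th_le|r_le] := leP (vnorm th) (2 * r).
    by exists (2 * r); split=> //; have := sqr_ge0 (vnorm th); lra.
  by exists (vnorm th); split=> //; [exact: ltW | have := sqr_ge0 r; lra].
have M_big : 2 * (E * M + K) <= m * M ^+ 2.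
  have : 0 <= (M - 2 * r) * (m * M + 2 * m * r - 2 * E).
    by rewrite mulr_ge0 //; have := m_gt0; nra.
  have := K_ge0; nra.
have etaE_le : eta * E <= M.
  have : eta * E <= eta * (m * r) by rewrite ler_pM2l.
  have := eta_m_le1; nra.
have : vnorm (sgd grad xs eta b th ws) <= M by exact: sgd_vnorm_le.
have := vnorm_ge0 (sgd grad xs eta b th ws); nra.
Qed.

Hypotheses (K1_ge0 : 0 <= K1) (K2_ge0 : 0 <= K2).
Hypothesis data_bound : forall x, x \in X -> vnorm x <= D.

Lemma grad_swap_le th x x' : x \in X -> x' \in X ->
  vnorm (grad th x - grad th x') <= 2 * D * K2 * (2 * vnorm th + 1).
Proof.
move=> xX x'X; apply: le_trans (grad_lipschitz th th xX x'X) _.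
rewrite subrr vnorm0 mulr0 add0r.
have x_le : vnorm (x - x') <= 2 * D.
  by apply: le_trans (vnormB_le _ _) _; have := data_bound xX; have := data_bound x'X; lra.
have th_ge0 : 0 <= 2 * vnorm th + 1 by rewrite addr_ge0 ?mulr_ge0 ?vnorm_ge0.
have := ler_wpM2r th_ge0 (ler_wpM2l K2_ge0 x_le); lra.
Qed.

Definition swap_penalty (B : R) : R :=
  4 * (eta / b%:R) * D * K2 * (1 + eta * K1) * (1 + 5 * B)
  + (eta / b%:R) ^+ 2 * (4 * D ^+ 2 * K2 ^+ 2) * (8 * B + 2).

Lemma swap_terms_le_penalty (x a dist w s B : R) :
  x ^+ 2 <= B -> a ^+ 2 <= B -> 0 <= a -> dist <= x + a ->
  0 <= w -> w <= (1 + eta * K1) * dist -> 0 <= s -> s <= 2 * D * K2 * (2 * a + 1) -> 0 <= D ->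
  2 * (eta / b%:R) * w * s + (eta / b%:R) ^+ 2 * s ^+ 2 <= swap_penalty B.
Proof.
move=> xB aB a_ge0 dist_le w_ge0 w_le s_ge0 s_le D_ge0; set c := eta / b%:R.
have a1_ge0 : 0 <= 2 * a + 1 by rewrite addr_ge0 ?mulr_ge0.
have dist_a : dist * (2 * a + 1) <= 1 + 5 * B.
  have := ler_wpM2r a1_ge0 dist_le.
  have := sqr_ge0 (x - a); have := sqr_ge0 (x - 1); have := sqr_ge0 (a - 1); lra.
have ws_le : w * s <= (1 + eta * K1) * (2 * D * K2) * (1 + 5 * B).
  have eK1_ge0 : 0 <= 1 + eta * K1 by rewrite addr_ge0 // mulr_ge0 // ltW.
  apply: le_trans (ler_pM w_ge0 s_ge0 w_le s_le) _.
  have := ler_wpM2l (mulr_ge0 eK1_ge0 (mulr_ge0 (mulr_ge0 (ler0n _ 2) D_ge0) K2_ge0)) dist_a.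
  lra.
have s_sqr : s ^+ 2 <= 4 * D ^+ 2 * K2 ^+ 2 * (8 * B + 2).
  apply: le_trans (_ : (2 * D * K2 * (2 * a + 1)) ^+ 2 <= _).
    by rewrite ler_sqr ?nnegrE // (le_trans s_ge0 s_le).
  have -> : (2 * D * K2 * (2 * a + 1)) ^+ 2 = 4 * D ^+ 2 * K2 ^+ 2 * (2 * a + 1) ^+ 2 by ring.
  rewrite ler_wpM2l ?mulr_ge0 ?sqr_ge0 //.
  by have := sqr_ge0 (2 * a - 1); nra.
have := ler_wpM2l (mulr_ge0 (ler0n _ 2) rate_ge0) ws_le.
have := ler_wpM2l (sqr_ge0 c) s_sqr.
rewrite /swap_penalty -/c; lra.
Qed.

Lemma sgd_step_dist_le xs xhs (j : 'I_n) A B u uh :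
  (forall i, xs i \in X) -> (forall i, xhs i \in X) -> (forall i, i != j -> xs i = xhs i) ->
  #|A| = b -> vnorm u ^+ 2 <= B -> vnorm uh ^+ 2 <= B ->
  vnorm (sgd_step xs u A - sgd_step xhs uh A) ^+ 2
    <= (1 - eta * m) * vnorm (u - uh) ^+ 2 + 2 * eta * K + (j \in A)%:R * swap_penalty B.
Proof.
move=> xsX xhsX xs_eq cardA uB uhB; rewrite sgd_step_sub; set c := eta / b%:R.
set W := u - uh - c *: _; set S := \sum_(i in A) _.
have W_sqr : vnorm W ^+ 2 <= (1 - eta * m) * vnorm (u - uh) ^+ 2 + 2 * eta * K.
  exact: batch_contraction.
have [jA|jA] := boolP (j \in A); last first.
  have -> : S = 0.
    apply: big1 => i iA; rewrite xs_eq ?subrr //.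
    by apply: contraNneq jA => <-.
  by rewrite scaler0 subr0 mul0r addr0.
set g := grad uh (xs j) - grad uh (xhs j).
have -> : S = g.
  rewrite /S (bigD1 j) //= big1 ?addr0 // => i /andP[_ ij].
  by rewrite xs_eq // subrr.
have := swap_terms_le_penalty uB uhB (vnorm_ge0 uh) (vnormB_le u uh)
  (vnorm_ge0 W) (batch_step_lipschitz u uh xsX cardA) (vnorm_ge0 g)
  (grad_swap_le uh (xsX j) (xhsX j)) (le_trans (vnorm_ge0 _) (data_bound (xsX j))).
have := vnormB_le W (c *: g); rewrite vnormZ (ger0_norm rate_ge0) -/c => Wg_le.
have := vnorm_ge0 (W - c *: g); rewrite mul1r; nra.
Qed.

Lemma sgd_sync_mse_le xs xhs (j : 'I_n) B th k :
  (forall i, xs i \in X) -> (forall i, xhs i \in X) -> (forall i, i != j -> xs i = xhs i) ->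
  (b <= n)%N ->
  (forall ws, all (fun A => #|A| == b) ws -> vnorm (sgd grad xs eta b th ws) ^+ 2 <= B) ->
  (forall ws, all (fun A => #|A| == b) ws -> vnorm (sgd grad xhs eta b th ws) ^+ 2 <= B) ->
  \sum_(w : k.-tuple (bsubset n b)) #|{: bsubset n b}|%:R ^- k *
      vnorm (sgd grad xs eta b th (map val w) - sgd grad xhs eta b th (map val w)) ^+ 2
    <= (1 - (1 - eta * m) ^+ k) * ((2 * eta * K + b%:R / n%:R * swap_penalty B) / (eta * m)).
Proof.
move=> xsX xhsX xs_eq b_le_n xs_B xhs_B.
pose F k (w : k.-tuple (bsubset n b)) :=
  vnorm (sgd grad xs eta b th (map val w) - sgd grad xhs eta b th (map val w)) ^+ 2.
apply: (tuple_mean_geometric_le (F := F)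
          (g := fun A : bsubset n b => 2 * eta * K + (j \in val A)%:R * swap_penalty B)).
- exact: card_bsubset_gt0.
- by rewrite subr_ge0.
- have n_gt0 : 0 < n%:R :> R by rewrite ltr0n (leq_ltn_trans (leq0n j) (ltn_ord j)).
  have batch_hits : \sum_(A : bsubset n b) ((j \in val A)%:R : R)
      = #|{: bsubset n b}|%:R * b%:R / n%:R.
    by rewrite -(@sum_bsubset_mem R n b j) mulrC mulKf ?gt_eqF.
  rewrite big_split /= sumr_const -mulr_natl -mulr_suml batch_hits.
  by field; rewrite ?mulf_neq0 ?gt_eqF.
- by move=> w; rewrite /F tuple0 /= subrr vnorm0 expr0n.
move=> {}k w A; rewrite /F /= map_rcons !sgd_rcons addrA.
have wb : all (fun A => #|A| == b) (map val w).
  by rewrite all_map; apply/allP => A' _; exact: (valP A').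
by apply: sgd_step_dist_le => //; [exact: eqP (valP A) | exact: xs_B | exact: xhs_B].
Qed.

End MinibatchSGD.

Lemma quadratic_pos_root (R : realType) (E m K : R) : 0 < m -> 0 <= K ->
  let r := (E + Num.sqrt (E ^+ 2 + 4 * m * K)) / (2 * m) in
  [/\ 0 <= r, E <= m * r & m * r ^+ 2 = E * r + K].
Proof.
move=> m_gt0 K_ge0 r; pose q := Num.sqrt (E ^+ 2 + 4 * m * K).
have disc_ge0 : 0 <= E ^+ 2 + 4 * m * K by rewrite addr_ge0 ?sqr_ge0 // !mulr_ge0 // ltW.
have q_sqr : q ^+ 2 = E ^+ 2 + 4 * m * K by rewrite sqr_sqrtr.
have q_ge : `|E| <= q by rewrite -sqrtr_sqr ler_sqrt // lerDl !mulr_ge0 // ltW.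
have E_le : E <= q := le_trans (ler_norm E) q_ge.
have NE_le : - E <= q by apply: le_trans q_ge; rewrite -normrN ler_norm.
have mr : m * r = (E + q) / 2 by rewrite /r -/q; field; rewrite gt_eqF.
split.
- by rewrite /r -/q; apply: divr_ge0; [lra | rewrite mulr_ge0 // ltW].
- by rewrite mr; lra.
apply: (mulfI (lt0r_neq0 m_gt0)).
have -> : m * (m * r ^+ 2) = (m * r) ^+ 2 by ring.
have -> : m * (E * r + K) = E * (m * r) + m * K by ring.
rewrite mr; lra.
Qed.

Lemma radius_le_B (R : realType) (t r D K1 K2 m K eta : R) :
  0 < m -> 0 <= K -> 0 <= eta -> eta * (K1 ^+ 2 + 64 * D ^+ 2 * K2 ^+ 2) <= m ->
  t ^+ 2 + 4 * r ^+ 2 <= 4 * t ^+ 2 + 4 * r ^+ 2 + 4 - (2 * eta / m) * K1 ^+ 2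
    - (112 * eta / m) * D ^+ 2 * K2 ^+ 2
    + (128 * eta / m) * D ^+ 2 * K2 ^+ 2 * r ^+ 2 + 4 * K / m + 2 * r ^+ 2.
Proof.
move=> m_gt0 K_ge0 eta_ge0 eta_le.
have u_ge0 : 0 <= eta / m by rewrite divr_ge0 // ltW.
have u_le : eta / m * (K1 ^+ 2 + 64 * D ^+ 2 * K2 ^+ 2) <= 1.
  by rewrite mulrAC ler_pdivrMr // mul1r.
have DK_ge0 : 0 <= eta / m * (D ^+ 2 * K2 ^+ 2) by rewrite mulr_ge0 // mulr_ge0 ?sqr_ge0.
have := mulr_ge0 DK_ge0 (sqr_ge0 r); have := sqr_ge0 t; have := sqr_ge0 r.
have : 0 <= K / m by rewrite divr_ge0 // ltW.
lra.
Qed.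

Theorem theorem4p1 (R : realType) (d p n b : nat) (X : set 'rV[R]_p)
  (f : 'rV[R]_d -> 'rV[R]_p -> R) (grad : 'rV[R]_d -> 'rV[R]_p -> 'rV[R]_d)
  (D E K1 K2 m K eta : R) (xs xhs : 'I_n -> 'rV[R]_p) (theta : 'rV[R]_d) :
  (* grad is the gradient of f in theta *)
  (forall (x : 'rV[R]_p) (th : 'rV[R]_d), x \in X ->
     differentiable (fun t => f t x) th /\
     forall v, 'd (fun t => f t x) th v = vdot (grad th x) v) ->
  (forall x, x \in X -> vnorm x <= D) ->
  (forall x, x \in X -> vnorm (grad 0 x) <= E) ->
  (* (A1) *)
  0 < K1 -> 0 < K2 ->
  (forall th th' x x', x \in X -> x' \in X ->
     vnorm (grad th x - grad th' x') <=
       K1 * vnorm (th - th') + K2 * vnorm (x - x') * (vnorm th + vnorm th' + 1)) ->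
  (* (A3) *)
  0 < m -> 0 < K ->
  (forall th1 th2 x, x \in X ->
     vdot (grad th1 x - grad th2 x) (th1 - th2) >= m * vnorm (th1 - th2) ^+ 2 - K) ->
  (* data sets in X^n differing in at most one index *)
  (forall i, xs i \in X) -> (forall i, xhs i \in X) ->
  (exists j : 'I_n, forall i, i != j -> xs i = xhs i) ->
  (0 < b)%N -> (b <= n)%N ->
  (* step size *)
  0 < eta -> eta < m^-1 -> eta < m / (K1 ^+ 2 + 64 * D ^+ 2 * K2 ^+ 2) ->
  forall k : nat,
  let r := (E + Num.sqrt (E ^+ 2 + 4 * m * K)) / (2 * m) in
  let B := 4 * vnorm theta ^+ 2 + 4 * r ^+ 2 + 4 - (2 * eta / m) * K1 ^+ 2
           - (112 * eta / m) * D ^+ 2 * K2 ^+ 2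
           + (128 * eta / m) * D ^+ 2 * K2 ^+ 2 * r ^+ 2 + 4 * K / m + 2 * r ^+ 2 in
  W2sq (sgd_law grad xs eta b theta k) (sgd_law grad xhs eta b theta k) <=
    (1 - (1 - eta * m) ^+ k) *
    (4 * D ^+ 2 * K2 ^+ 2 * eta * (8 * B + 2) / (b%:R * n%:R * m)
     + 4 * K2 * D * (1 + K1 * eta) / (n%:R * m) * (1 + 5 * B)
     + 2 * K / m).
Proof.
move=> _ data_bound grad0_bound K1_gt0 K2_gt0 grad_lip m_gt0 K_gt0 grad_diss xsX xhsX
  [j xs_eq] b_gt0 b_le_n eta_gt0 eta_lt_inv eta_lt k; cbv zeta.
set r := (E + _) / (2 * m); set B := (_ + 2 * r ^+ 2).
have eta_m : eta * m <= 1 by rewrite -(mulVf (lt0r_neq0 m_gt0)) ler_pM2r // ltW.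
have S_gt0 : 0 < K1 ^+ 2 + 64 * D ^+ 2 * K2 ^+ 2.
  by have := exprn_gt0 2 K1_gt0; have := sqr_ge0 (D * K2); lra.
have eta_S : eta * (K1 ^+ 2 + 64 * D ^+ 2 * K2 ^+ 2) <= m by rewrite ltW // -ltr_pdivlMr.
have etaK1 : eta * K1 ^+ 2 <= m.
  by have := mulr_ge0 (ltW eta_gt0) (sqr_ge0 (D * K2)); lra.
have [r_ge0 Er r_root] := quadratic_pos_root E m_gt0 (ltW K_gt0).
have iterates_B (ys : 'I_n -> 'rV[R]_p) : (forall i, ys i \in X) ->
    forall ws, all (fun A : {set 'I_n} => #|A| == b) ws ->
    vnorm (sgd grad ys eta b theta ws) ^+ 2 <= B.
  move=> ysX ws wsb; apply: le_trans (radius_le_B _ r m_gt0 (ltW K_gt0) (ltW eta_gt0) eta_S).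
  exact: (sgd_vnorm_sqr_le grad_lip grad_diss b_gt0 eta_gt0 etaK1 m_gt0 (ltW K_gt0) eta_m
            grad0_bound theta ysX wsb r_ge0 Er r_root).
apply: le_trans (W2sq_sync_le _ _ _) _; first by rewrite invr_ge0 exprn_ge0.
apply: le_trans (sgd_sync_mse_le grad_lip grad_diss b_gt0 eta_gt0 etaK1 m_gt0 eta_m
  (ltW K1_gt0) (ltW K2_gt0) data_bound k xsX xhsX xs_eq b_le_n
  (iterates_B _ xsX) (iterates_B _ xhsX)) _.
rewrite le_eqVlt; apply/orP; left; apply/eqP; congr (_ * _); rewrite /swap_penalty.
have n_gt0 : (0 < n)%N := leq_trans b_gt0 b_le_n.
by field; rewrite !gt_eqF ?ltr0n.
Qed.
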